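(* Let $s\in\{+1,-1\}$ and let $(X,d,\lambda)$ be an admissible space, with orthonormal basis $\{\varphi_n\}_{n\in\mathbb N}$ of $L^2(X)$ and point $\mathfrak o\in X$ as in the definition of admissibility. Then for every nonzero $f\in\mathcal A_s(X)$, $$\lambda(\{x\in X: f(x)<0\})\sum_{n\ge 0:\ s\widehat f(n)<0}\|\varphi_n\|_{L^\infty(X)}^2\ \ge\ \frac1{16}.$$ In particular, $$\lambda\big(B(\mathfrak o, r(f;X))\big)\sum_{n=0}^{k(s\widehat f)-1}\|\varphi_n\|_{L^\infty(X)}^2\ \ge\ \frac1{16}.$$
   Context: $(X,d,\lambda)$ is a metric measure space with distance $d$ and probability measure $\lambda$; $L^2(X)$ denotes square-integrable real-valued functions; $B(x,r)=\{y\in X: d(x,y)\le r\}$; $\mathbb N=\{0,1,2,\dots\}$. The space is admissible if there exist an orthonormal basis $\{\varphi_n:X\to\mathbb R\}_{n\in\mathbb N}$ of $L^2(X)$ and a point $\mathfrak o\in X$ such that $\varphi_0\equiv1$ and, for every $n$, $\varphi_n(\mathfrak o):=\lim_{r\to0^+}\frac{1}{\lambda(B(\mathfrak o,r))}\int_{B(\mathfrak o,r)}\varphi_n\,d\lambda$ exists and equals $\|\varphi_n\|_{L^\infty(X)}<\infty$. For $f\in L^2(X)$ write $\widehat f(n)=\int_X f\varphi_n\,d\lambda$. For $s\in\{+1,-1\}$, $\mathcal A_s(X)$ is the set of real-valued $f\in L^2(X)$ such that $\sum_{n}|\widehat f(n)|\,\|\varphi_n\|_{L^\infty(X)}<\infty$,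 $\widehat f(0)\le 0$, the sequence $\{s\widehat f(n)\}_n$ is eventually nonnegative, and $sf(\mathfrak o)\le 0$, where $f(\mathfrak o):=\sum_n\widehat f(n)\varphi_n(\mathfrak o)$. Write $r_1\sim r_2$ if $\lambda(B(\mathfrak o,r_1))=\lambda(B(\mathfrak o,r_2))$; let $\mathcal R$ be the set of infima of the equivalence classes of $[0,\infty)$ under $\sim$. Define $r(f;X)=\inf\{r\in\mathcal R: f(x)\ge0\text{ for }\lambda\text{-a.e. }x\text{ with }d(x,\mathfrak o)\ge r\}$ and $k(s\widehat f)=\min\{k\ge1: s\widehat f(n)\ge0\text{ for all }n\ge k\}$. *)

From HB Require Import structures.
From mathcomp Require Import all_boot all_order all_algebra.
From mathcomp Require Import all_classical all_reals all_analysis.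
Set Implicit Arguments. Unset Strict Implicit. Unset Printing Implicit Defensive.
Import Order.TTheory GRing.Theory Num.Theory.
Import numFieldNormedType.Exports.
Local Open Scope classical_set_scope.
Local Open Scope ring_scope.

Section Defs.
Context {d : measure_display} {X : measurableType d} {R : realType}.

Definition is_metric (dist : X -> X -> R) : Prop :=
  [/\ forall x y, 0 <= dist x y,
      forall x y, dist x y = 0 <-> x = y,
      forall x y, dist x y = dist y x &
      forall x y z, dist x z <= dist x y + dist y z].

Definition metric_open (dist : X -> X -> R) (A : set X) : Prop :=
  forall x, A x -> exists2 e : R, 0 < e & [set y | dist x y < e] `<=` A.

(** closed ball B(o, r) = {y | d(o,y) <= r}; for r : \bar R, so that
    B(o, +oo) = X. *)
Definition cball (dist : X -> X -> R) (o : X) (r : R) : set X :=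
  [set y | dist o y <= r].
Definition ecball (dist : X -> X -> R) (o : X) (r : \bar R) : set X :=
  [set y | ((dist o y)%:E <= r)%E].

Variable P : probability X R.

Definition L2 (f : X -> R) : Prop :=
  measurable_fun setT f /\ P.-integrable setT (fun x => ((f x) ^+ 2)%:E).

Definition fcoef (phi : nat -> X -> R) (f : X -> R) (n : nat) : R :=
  Rintegral P setT (fun x => f x * phi n x).

Definition Linf (g : X -> R) : \bar R := ('N[P]_(+oo%E)[EFin \o g])%E.

Definition orthonormal_basis (phi : nat -> X -> R) : Prop :=
  (forall n, L2 (phi n)) /\
  (forall n m, Rintegral P setT (fun x => phi n x * phi m x)
               = if n == m then 1 else 0) /\
  (forall f, L2 f ->
     (fun N => (\int[P]_x (((f x - \sum_(0 <= i < N) fcoef phi f i * phi i x)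
                              ^+ 2)%:E))%E) @ \oo --> 0%E).

Definition ball_avg (dist : X -> X -> R) (o : X) (g : X -> R) (r : R) : R :=
  (fine (P (cball dist o r)))^-1 * Rintegral P (cball dist o r) g.

Definition val_at (dist : X -> X -> R) (o : X) (g : X -> R) : R :=
  lim (ball_avg dist o g @ 0^'+).

Definition admissible (dist : X -> X -> R) (phi : nat -> X -> R) (o : X) : Prop :=
  orthonormal_basis phi /\
  {ae P, forall x, phi 0%N x = 1} /\
  (forall n, (Linf (phi n) < +oo)%E /\
     ball_avg dist o (phi n) @ 0^'+ --> fine (Linf (phi n))).

Definition val_series (dist : X -> X -> R) (phi : nat -> X -> R) (o : X)
    (f : X -> R) : R :=
  limn (series (fun n => fcoef phi f n * val_at dist o (phi n))).

Definition A_s (s : R) (dist : X -> X -> R) (phi : nat -> X -> R) (o : X)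
    (f : X -> R) : Prop :=
  [/\ L2 f,
      (\sum_(n <oo) (`|fcoef phi f n| * fine (Linf (phi n)))%:E < +oo)%E,
      fcoef phi f 0%N <= 0,
      (\forall n \near \oo, 0 <= s * fcoef phi f n) &
      s * val_series dist phi o f <= 0].

(** the set R of infima of the classes of [0,oo) under r1 ~ r2 *)
Definition Rset (dist : X -> X -> R) (o : X) : set R :=
  [set inf [set r' | 0 <= r' /\ P (cball dist o r') = P (cball dist o r)]
  | r in [set r : R | 0 <= r]].

(** r(f;X), as an extended real (inf of the empty set is +oo) *)
Definition r_fX (dist : X -> X -> R) (o : X) (f : X -> R) : \bar R :=
  ereal_inf (EFin @` [set r | Rset dist o r /\
     {ae P, forall x, r <= dist x o -> 0 <= f x}]).

End Defs.

Definition kmin {R : realType} (a : nat -> R) : nat :=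
  xget 0%N [set k | [/\ (1 <= k)%N, (forall n, (k <= n)%N -> 0 <= a n) &
     forall k', (1 <= k')%N -> (forall n, (k' <= n)%N -> 0 <= a n) -> (k <= k')%N]].

From HB Require Import structures.
From mathcomp Require Import all_boot all_order all_algebra.
From mathcomp Require Import all_classical all_reals all_analysis.
From mathcomp Require Import ring lra measurable_realfun ess_sup_inf.
Set Implicit Arguments.
Unset Strict Implicit.
Unset Printing Implicit Defensive.
Import Order.TTheory GRing.Theory Num.Theory.
Import numFieldNormedType.Exports.
Local Open Scope classical_set_scope.
Local Open Scope ring_scope.

(* Write c_n for the Fourier coefficients of f, L_n for the sup norms of the
   basis, Q for the squared L^2 norm of f, G := int (|f| - f) = 2 int f^-,
   p := lambda(f < 0), and T, A, S for the sums of |c_n| L_n, c_n^2 and L_n^2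
   over the indices n < K with s c_n < 0, where s c_n >= 0 for every n >= K.
   (1) The partial sums of sum_n s c_n L_n increase from K on and converge to
       s f(o) <= 0; hence sum_{n<N} |c_n| L_n <= 2 T for all N >= K.
   (2) Since |phi_n| <= L_n a.e., sum_{n<N} c_n^2 = <f, S_N f> is at most
       (int |f|) sum_{n<N} |c_n| L_n <= 2 T G, because int |f| = c_0 + G <= G;
       by Parseval, Q <= 2 T G.
   (3) Cauchy-Schwarz gives T^2 <= A S <= Q S and G^2 <= 4 p Q.
   Chaining, Q^2 <= 4 T^2 G^2 <= 16 Q^2 p S, i.e. p S >= 1/16.  The second
   inequality follows since lambda(f < 0) <= lambda(B(o, r(f;X))) and the
   indices with s c_n < 0 all lie below k(s c). *)

Section real_inequalities.
Context {R : realFieldType}.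

Lemma sqr_le_of_amgm (x a b : R) : 0 <= x -> 0 <= a -> 0 <= b ->
  (forall t, 0 < t -> 2 * x <= t * a + b / t) -> x ^+ 2 <= a * b.
Proof.
move=> + a0 b0 amgm; rewrite le_eqVlt => /predU1P[<-|x0].
  by rewrite expr0n mulr_ge0.
move: a0; rewrite le_eqVlt => /predU1P[a0|a0].
  (* a = 0 is impossible for x > 0: t := (b + 1) / x gives 2 x <= b x / (b + 1) < x *)
  have b1 : 0 < b + 1 by rewrite ltr_wpDl.
  have := amgm _ (divr_gt0 b1 x0); rewrite -a0 mulr0 add0r.
  have : b / ((b + 1) / x) * (b + 1) = b * x by field; rewrite !gt_eqF.
  move: (b / ((b + 1) / x)) => y; nra.
have := amgm _ (divr_gt0 x0 a0); rewrite divfK ?gt_eqF //.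
have : b / (x / a) * x = a * b by field; rewrite !gt_eqF.
move: (b / (x / a)) => y; nra.
Qed.

Lemma big_cauchy_schwarz (I : Type) (r : seq I) (Pr : pred I) (u v : I -> R) :
  (\sum_(i <- r | Pr i) u i * v i) ^+ 2 <=
  (\sum_(i <- r | Pr i) u i ^+ 2) * (\sum_(i <- r | Pr i) v i ^+ 2).
Proof.
rewrite -real_normK ?num_real //; apply: sqr_le_of_amgm => //.
- by apply: sumr_ge0 => i _; exact: sqr_ge0.
- by apply: sumr_ge0 => i _; exact: sqr_ge0.
move=> t t0; rewrite big_distrr big_distrl -big_split /=.
apply: le_trans (ler_wpM2l _ (ler_norm_sum _ _ _)) _ => //.
rewrite big_distrr; apply: ler_sum => i _.
rewrite -subr_ge0 -(pmulr_rge0 _ t0) normrM.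
have -> : t * (t * u i ^+ 2 + v i ^+ 2 / t - 2 * (`|u i| * `|v i|)) =
          (t * `|u i| - `|v i|) ^+ 2.
  by rewrite !sqrrB !exprMn !real_normK ?num_real //; field; rewrite gt_eqF.
exact: sqr_ge0.
Qed.

Lemma uncertainty_ineq (Q T G p A S : R) :
  0 < Q -> 0 <= T -> 0 <= G -> 0 <= p -> 0 <= S ->
  Q <= 2 * T * G -> G ^+ 2 <= 4 * p * Q -> T ^+ 2 <= A * S -> A <= Q ->
  16^-1 <= p * S.
Proof.
(* Q^2 <= 4 T^2 G^2 <= 16 (A S) (p Q) <= 16 Q^2 p S *)
move=> Q0 T0 G0 p0 S0 QTG GpQ TAS AQ.
have QQ : Q ^+ 2 <= 4 * T ^+ 2 * G ^+ 2 by nra.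
have TG : T ^+ 2 * G ^+ 2 <= A * S * (4 * p * Q) by apply: ler_pM; rewrite ?sqr_ge0.
have AS : A * S * (4 * p * Q) <= Q * S * (4 * p * Q).
  by apply: ler_wpM2r; [nra | exact: ler_wpM2r].
have : Q ^+ 2 * 1 <= Q ^+ 2 * (16 * (p * S)) by nra.
rewrite ler_pM2l ?exprn_gt0 // => one_le.
by rewrite -(@ler_pM2l _ 16) // mulfV.
Qed.

End real_inequalities.

Section partial_sums.
Context {R : realType}.

Lemma sum_cond_nat_cut (Pr : pred nat) (F : nat -> R) (K0 K : nat) : (K0 <= K)%N ->
  (forall i, (K0 <= i)%N -> ~~ Pr i) ->
  \sum_(0 <= i < K | Pr i) F i = \sum_(0 <= i < K0 | Pr i) F i.
Proof.
move=> K0K notPr; rewrite (big_cat_nat (leq0n K0) K0K) /=.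
rewrite [X in _ + X]big_nat_cond [X in _ + X]big1 ?addr0 //.
by move=> i /andP[/andP[/notPr/negPf -> _]].
Qed.

Lemma eseries_cond_cut (Pr : pred nat) (F : nat -> R) (K0 : nat) :
  (forall i, (K0 <= i)%N -> ~~ Pr i) ->
  (\sum_(n <oo | Pr n) (F n)%:E = (\sum_(0 <= n < K0 | Pr n) F n)%:E)%E.
Proof.
move=> notPr; apply: cvg_lim => //; apply: cvg_near_cst; exists K0 => // K /= K0K.
by rewrite sumEFin (sum_cond_nat_cut _ K0K notPr).
Qed.

Lemma series_nondecreasing_from (u : nat -> R) (K0 : nat) :
  (forall n, (K0 <= n)%N -> 0 <= u n) ->
  forall n m, (K0 <= n)%N -> (n <= m)%N -> series u n <= series u m.
Proof.
move=> u_ge0 n m K0n nm; rewrite /series /= (big_cat_nat (leq0n n) nm) /= lerDl.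
by rewrite big_nat_cond; apply: sumr_ge0 => i /andP[/andP[/(leq_trans K0n)/u_ge0]].
Qed.

Lemma is_cvg_series_bounded (u : nat -> R) (K0 : nat) (M : R) :
  (forall n, (K0 <= n)%N -> 0 <= u n) -> (forall K, series u K <= M) ->
  cvgn (series u).
Proof.
move=> u_ge0 bounded; apply: (near_nondecreasing_is_cvgn (M := M)); last exact: nearW.
exists K0 => // n /= K0n m; apply: (@series_nondecreasing_from u K0 u_ge0 n m K0n).
Qed.

Lemma series_le_lim (u : nat -> R) (K0 : nat) :
  (forall n, (K0 <= n)%N -> 0 <= u n) -> cvgn (series u) ->
  forall K, (K0 <= K)%N -> series u K <= limn (series u).
Proof.
move=> u_ge0 cvg_u K K0K; apply: limr_ge => //.
by exists K => // m /= Km; exact: (@series_nondecreasing_from u K0 u_ge0 K m K0K Km).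
Qed.

Lemma sum_abs_le_twice_neg (s : R) (c L : nat -> R) (K0 K : nat) :
  `|s| = 1 -> (K0 <= K)%N -> (forall i, (K0 <= i)%N -> 0 <= s * c i) ->
  \sum_(0 <= i < K) s * c i * L i <= 0 ->
  \sum_(0 <= i < K) `|c i| * L i <= 2 * \sum_(0 <= i < K0 | s * c i < 0) `|c i| * L i.
Proof.
move=> s1 K0K c_ge0 sum_le0.
have split_abs i : `|c i| * L i =
    s * c i * L i + 2 * (if s * c i < 0 then `|c i| * L i else 0).
  have -> : `|c i| = `|s * c i| by rewrite normrM s1 mul1r.
  by case: ltP => [/ltr0_norm -> | /ger0_norm ->]; ring.
under eq_bigr do rewrite split_abs.
rewrite big_split /= -mulr_sumr -big_mkcond /=.
rewrite (sum_cond_nat_cut (Pr := fun i => s * c i < 0) _ K0K); first lra.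
by move=> i /c_ge0; rewrite -leNgt.
Qed.

Lemma kmin_tail (a : nat -> R) (K0 : nat) : (forall n, (K0 <= n)%N -> 0 <= a n) ->
  forall n, (kmin a <= n)%N -> 0 <= a n.
Proof.
move=> a_ge0; have kmin_ex : exists k,
    [set k | [/\ (1 <= k)%N, (forall n, (k <= n)%N -> 0 <= a n) &
     forall k', (1 <= k')%N -> (forall n, (k' <= n)%N -> 0 <= a n) -> (k <= k')%N]] k.
  have ex : exists k, `[< (1 <= k)%N /\ forall n, (k <= n)%N -> 0 <= a n >].
    by exists K0.+1; apply/asboolP; split => // n /ltnW; exact: a_ge0.
  case: (ex_minnP ex) => k /asboolP[k_ge1 k_tail] k_min.
  by exists k; split => // k' k'_ge1 k'_tail; apply: k_min; exact/asboolP.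
by have [] := xgetPex 0%N kmin_ex.
Qed.

End partial_sums.

Section L2_space.
Context {d : measure_display} {X : measurableType d} {R : realType}.
Variable P : probability X R.

Lemma measurable_lt0 (g : X -> R) : measurable_fun setT g -> measurable [set x | g x < 0].
Proof.
move=> mg; have -> : [set x | g x < 0] = g @^-1` `]-oo, 0[.
  by apply/seteqP; split => x /=; rewrite in_itv.
by rewrite -[X in measurable X]setTI; exact: mg.
Qed.

Lemma integrableZl_EFin (k : R) (h : X -> R) : P.-integrable setT (EFin \o h) ->
  P.-integrable setT (EFin \o (fun x => k * h x)).
Proof.
by move=> /(integrableZl measurableT k); apply: eq_integrable => // x _; rewrite /= EFinM.
Qed.

Lemma integrableD_EFin (h1 h2 : X -> R) : P.-integrable setT (EFin \o h1) ->
  P.-integrable setT (EFin \o h2) -> P.-integrable setT (EFin \o (fun x => h1 x + h2 x)).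
Proof.
by move=> /(integrableD measurableT) I /I; apply: eq_integrable => // x _; rewrite /= EFinD.
Qed.

Definition l2dot (g h : X -> R) : R := Rintegral P setT (fun x => g x * h x).

Lemma L2_integrableM (g h : X -> R) : L2 P g -> L2 P h ->
  P.-integrable setT (EFin \o (fun x => g x * h x)).
Proof.
move=> [mg ig] [mh ih].
apply: (le_integrable measurableT _ _ (integrableD measurableT ig ih)).
  by apply/measurable_EFinP; exact: measurable_funM.
move=> x _; rewrite /= lee_fin.
rewrite (ger0_norm (_ : 0 <= g x ^+ 2 + h x ^+ 2)); last by nra.
by rewrite ler_norml; apply/andP; split; nra.
Qed.

Lemma L2_cst (k : R) : L2 P (fun=> k).
Proof.
split; first exact: measurable_cst.
exact: finite_measure_integrable_cst.
Qed.

Lemma L2_integrable (g : X -> R) : L2 P g -> P.-integrable setT (EFin \o g).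
Proof.
move=> Lg; apply: eq_integrable (L2_integrableM Lg (L2_cst 1)) => // x _.
by rewrite /= mulr1.
Qed.

Lemma L2D (g h : X -> R) : L2 P g -> L2 P h -> L2 P (fun x => g x + h x).
Proof.
move=> Lg Lh; split; first by apply: measurable_funD; [case: Lg | case: Lh].
have I := integrableD measurableT (L2_integrableM Lg Lg)
  (integrableD measurableT (integrableZl measurableT 2 (L2_integrableM Lg Lh))
                           (L2_integrableM Lh Lh)).
by apply: eq_integrable I => // x _ /=; rewrite -!EFinM -!EFinD; congr EFin; ring.
Qed.

Lemma L2Z (k : R) (g : X -> R) : L2 P g -> L2 P (fun x => k * g x).
Proof.
move=> Lg; split; first by apply: measurable_funM => //; case: Lg.
have I := integrableZl measurableT (k ^+ 2) (L2_integrableM Lg Lg).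
by apply: eq_integrable I => // x _ /=; rewrite -EFinM; congr EFin; ring.
Qed.

Lemma L2B (g h : X -> R) : L2 P g -> L2 P h -> L2 P (fun x => g x - h x).
Proof.
move=> Lg Lh; have := L2D Lg (L2Z (-1) Lh).
by under eq_fun do rewrite mulN1r.
Qed.

Lemma L2_norm (g : X -> R) : L2 P g -> L2 P (fun x => `|g x|).
Proof.
move=> [mg ig]; split; first exact: measurableT_comp.
by apply: eq_integrable ig => // x _; rewrite /= real_normK ?num_real.
Qed.

Lemma L2_sum (c : nat -> R) (g : nat -> X -> R) (K : nat) :
  (forall n, L2 P (g n)) -> L2 P (fun x => \sum_(0 <= i < K) c i * g i x).
Proof.
move=> Lg; elim: K => [|K IH].
  by under eq_fun do rewrite big_geq //; exact: L2_cst.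
under eq_fun do rewrite big_nat_recr //=.
exact: L2D IH (L2Z (c K) (Lg K)).
Qed.

Lemma l2dotC (g h : X -> R) : l2dot g h = l2dot h g.
Proof. by apply: eq_Rintegral => x _; rewrite mulrC. Qed.

Lemma l2dot_self_ge0 (g : X -> R) : 0 <= l2dot g g.
Proof. by apply: Rintegral_ge0 => x _; rewrite -expr2 sqr_ge0. Qed.

Lemma l2dotDr (g h1 h2 : X -> R) : L2 P g -> L2 P h1 -> L2 P h2 ->
  l2dot g (fun x => h1 x + h2 x) = l2dot g h1 + l2dot g h2.
Proof.
move=> Lg L1 L2'; rewrite /l2dot -RintegralD ?L2_integrableM //.
by apply: eq_Rintegral => x _; rewrite mulrDr.
Qed.

Lemma l2dotZr (g h : X -> R) (k : R) : L2 P g -> L2 P h ->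
  l2dot g (fun x => k * h x) = k * l2dot g h.
Proof.
move=> Lg Lh; rewrite /l2dot -RintegralZl ?L2_integrableM //.
by apply: eq_Rintegral => x _; rewrite mulrCA.
Qed.

Lemma l2dotBr (g h1 h2 : X -> R) : L2 P g -> L2 P h1 -> L2 P h2 ->
  l2dot g (fun x => h1 x - h2 x) = l2dot g h1 - l2dot g h2.
Proof.
move=> Lg L1 L2'; rewrite /l2dot -RintegralB ?L2_integrableM //.
by apply: eq_Rintegral => x _; rewrite mulrBr.
Qed.

Lemma l2dotBl (g1 g2 h : X -> R) : L2 P g1 -> L2 P g2 -> L2 P h ->
  l2dot (fun x => g1 x - g2 x) h = l2dot g1 h - l2dot g2 h.
Proof. by move=> L1 L2' Lh; rewrite l2dotC l2dotBr // !(l2dotC h). Qed.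

Lemma l2dot_sumr (g : X -> R) (c : nat -> R) (h : nat -> X -> R) (K : nat) :
  L2 P g -> (forall n, L2 P (h n)) ->
  l2dot g (fun x => \sum_(0 <= i < K) c i * h i x) =
  \sum_(0 <= i < K) c i * l2dot g (h i).
Proof.
move=> Lg Lh; elim: K => [|K IH].
  rewrite big_geq // /l2dot; under eq_Rintegral do rewrite big_geq // mulr0.
  by rewrite Rintegral_cst // mul0r.
rewrite big_nat_recr //=; under eq_fun do rewrite big_nat_recr //=.
by rewrite l2dotDr ?IH ?l2dotZr //; [exact: L2_sum | exact: L2Z].
Qed.

End L2_space.

Section Bessel.
Context {d : measure_display} {X : measurableType d} {R : realType}.
Variables (P : probability X R) (phi : nat -> X -> R) (f : X -> R).
Hypothesis Lphi : forall n, L2 P (phi n).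
Hypothesis phi_orthonormal :
  forall n m, l2dot P (phi n) (phi m) = if n == m then 1 else 0.
Hypothesis Lf : L2 P f.

Local Notation c := (fcoef P phi f).

Definition fourier_sum (K : nat) (x : X) : R := \sum_(0 <= i < K) c i * phi i x.

Lemma L2_fourier_sum K : L2 P (fourier_sum K).
Proof. exact: L2_sum. Qed.

Lemma l2dot_fourier_sumr K : l2dot P f (fourier_sum K) = \sum_(0 <= i < K) c i ^+ 2.
Proof. by rewrite l2dot_sumr //; apply: eq_bigr => i _; rewrite expr2. Qed.

Lemma l2dot_fourier_sum K :
  l2dot P (fourier_sum K) (fourier_sum K) = \sum_(0 <= i < K) c i ^+ 2.
Proof.
rewrite {2}/fourier_sum l2dot_sumr //; last exact: L2_fourier_sum.
apply: eq_big_nat => i /andP[_ iK]; rewrite l2dotC l2dot_sumr // expr2.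
rewrite (bigD1_seq i) ?mem_index_iota ?iota_uniq //= phi_orthonormal eqxx mulr1.
by rewrite big1 ?addr0 // => j /negPf ji; rewrite phi_orthonormal eq_sym ji mulr0.
Qed.

Lemma l2dot_fourier_residual K :
  l2dot P (fun x => f x - fourier_sum K x) (fun x => f x - fourier_sum K x) =
  l2dot P f f - \sum_(0 <= i < K) c i ^+ 2.
Proof.
have LS := L2_fourier_sum K.
rewrite l2dotBl //; last exact: L2B.
rewrite (l2dotBr Lf Lf LS) (l2dotBr LS Lf LS) (l2dotC P (fourier_sum K) f).
by rewrite l2dot_fourier_sum l2dot_fourier_sumr; ring.
Qed.

Lemma bessel K : \sum_(0 <= i < K) c i ^+ 2 <= l2dot P f f.
Proof.
by rewrite -subr_ge0 -l2dot_fourier_residual l2dot_self_ge0.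
Qed.

Lemma parseval :
  (fun K => (\int[P]_x (((f x - fourier_sum K x) ^+ 2)%:E))%E) @ \oo --> 0%E ->
  (fun K => \sum_(0 <= i < K) c i ^+ 2) @ \oo --> l2dot P f f.
Proof.
have residualE K : (\int[P]_x (((f x - fourier_sum K x) ^+ 2)%:E))%E =
                   (l2dot P f f - \sum_(0 <= i < K) c i ^+ 2)%:E.
  have I := L2_integrableM (L2B Lf (L2_fourier_sum K)) (L2B Lf (L2_fourier_sum K)).
  rewrite -l2dot_fourier_residual /l2dot /Rintegral.
  rewrite (fineK (integrable_fin_num measurableT I)).
  by apply: eq_integral => x _; rewrite expr2.
under eq_fun do rewrite residualE.
move=> /fine_cvg /= /(cvgB (cvg_cst (l2dot P f f))); rewrite subr0.
apply: cvg_trans; apply: near_eq_cvg; apply: nearW => K /=.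
by rewrite opprB addrC subrK.
Qed.

End Bessel.

Section metric_balls.
Context {d : measure_display} {X : measurableType d} {R : realType}.
Variables (dist : X -> X -> R) (o : X).
Hypothesis dist_metric : is_metric dist.
Hypothesis open_measurable : forall A : set X, metric_open dist A -> measurable A.

Lemma measurable_cball (r : R) : measurable (cball dist o r).
Proof.
have [_ _ dist_sym dist_tri] := dist_metric.
rewrite -(setCK (cball dist o r)); apply/measurableC/open_measurable => x /= rx.
exists (dist o x - r) => [|y /= yx]; first by rewrite subr_gt0 ltNge; exact/negP.
rewrite /cball /= => yr; have := dist_tri o y x; rewrite (dist_sym y x); lra.
Qed.

Lemma cball_lt0 (r : R) : r < 0 -> cball dist o r = set0.
Proof.
have [dist_ge0 _ _ _] := dist_metric.
by move=> r0; apply/seteqP; split => x //=; have := dist_ge0 o x; rewrite /cball /=; lra.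
Qed.

Variable P : probability X R.

Lemma measure_cball_cvg (r : R) :
  P (cball dist o (r + n.+1%:R^-1)) @[n --> \oo] --> P (cball dist o r).
Proof.
set F := fun n : nat => cball dist o (r + n.+1%:R^-1).
have capF : \bigcap_n F n = cball dist o r.
  apply/seteqP; split => x /= => [xF|xr n _]; last first.
    by apply: le_trans xr _; rewrite lerDl invr_ge0.
  apply/ler_addgt0Pr => e e0; have [n ne] : exists n : nat, e^-1 < n.+1%:R.
    by eexists; exact: truncnS_gt.
  apply: le_trans (xF n I) _; rewrite lerD2l -(invrK e) lef_pV2 ?posrE ?invr_gt0//.
  exact: ltW.
have F_nonincr : {homo F : n m / (n <= m)%N >-> (m <= n)%O}.
  move=> n m nm; rewrite subsetEset => x; rewrite /F /cball /= => /le_trans; apply.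
  by rewrite lerD2l lef_pV2 ?posrE // ler_nat ltnS.
rewrite -capF; apply: nonincreasing_cvg_mu => //.
- exact: le_lt_trans (probability_le1 P (measurable_cball _)) (ltry _).
- by move=> n; exact: measurable_cball.
- by rewrite capF; exact: measurable_cball.
Qed.

Lemma measure_neg_le_cball (f : X -> R) (e : R) : measurable_fun setT f ->
  (r_fX P dist o f < e%:E)%E -> (P [set x | (f x < 0)%R] <= P (cball dist o e))%E.
Proof.
move=> mf /ereal_inf_lt[_ [r [_ [N [mN PN f_ge0]]] <-]]; rewrite lte_fin => re.
have [_ _ dist_sym _] := dist_metric.
have sub : [set x | f x < 0] `<=` cball dist o e `|` N.
  move=> x /= fx; have [|Nx] := pselect (N x); first by right.
  left; rewrite /cball /= dist_sym; apply/ltW/(lt_trans _ re); rewrite ltNge.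
  by apply/negP => rx; apply: Nx (f_ge0 x _) => /(_ rx); rewrite leNgt fx.
apply: (le_trans (le_measure P _ _ sub)); rewrite ?inE.
- exact: measurable_lt0.
- exact: measurableU (measurable_cball _) mN.
apply: (le_trans (measureU2 P (measurable_cball _) mN)).
by rewrite [X in (_ + X <= _)%E](_ : _ = 0%E) ?adde0 //; exact: PN.
Qed.

Lemma measure_neg_le_ecball_r_fX (f : X -> R) : measurable_fun setT f ->
  (P [set x | (f x < 0)%R] <= P (ecball dist o (r_fX P dist o f)))%E.
Proof.
move=> mf; case r_eq: (r_fX P dist o f) => [r| |].
- have -> : ecball dist o r%:E = cball dist o r.
    by apply/seteqP; split => x; rewrite /ecball /cball /= lee_fin.
  have cvg_ball := @measure_cball_cvg r.
  rewrite -(cvg_lim _ cvg_ball) //; apply: lime_ge.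
    by apply/cvg_ex; eexists; exact: cvg_ball.
  apply: nearW => n; apply: measure_neg_le_cball => //.
  by rewrite r_eq lte_fin ltrDl invr_gt0.
- have -> : ecball dist o +oo = setT.
    by apply/seteqP; split => x // _; rewrite /ecball /= leey.
  by apply: le_measure; rewrite ?inE //; exact: measurable_lt0.
- have -> : ecball dist o -oo = cball dist o (-1).
    by rewrite cball_lt0 ?ltrN10 //; apply/seteqP; split => x //=.
  by apply: measure_neg_le_cball; rewrite // r_eq ltNyr.
Qed.

End metric_balls.

Section ae_bounds.
Context {d : measure_display} {X : measurableType d} {R : realType}.
Variable P : probability X R.

Lemma ae_abs_le_Linf (g : X -> R) : (Linf P g < +oo)%E ->
  {ae P, forall x, `|g x| <= fine (Linf P g)}.
Proof.
move=> g_fin; have LinfE : Linf P g = ess_sup P (abse \o (EFin \o g)).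
  by rewrite /Linf unlock /= probability_setT lte01.
have : Linf P g \is a fin_num by rewrite ge0_fin_numE // Lnorm_ge0.
move=> /fineK Linf_fin; apply: filterS (ess_sup_ge P (abse \o (EFin \o g))) => x /=.
by rewrite -lee_fin Linf_fin LinfE -abse_EFin.
Qed.

Lemma le_Rintegral_ae (g h : X -> R) : P.-integrable setT (EFin \o g) ->
  P.-integrable setT (EFin \o h) -> {ae P, forall x, g x <= h x} ->
  Rintegral P setT g <= Rintegral P setT h.
Proof.
move=> ig ih [N [mN PN gh]].
rewrite /Rintegral !(negligible_integral mN measurableT _ PN) //.
apply: le_Rintegral; first exact: measurableD.
- by apply: integrableS ig => //; exact: measurableD.
- by apply: integrableS ih => //; exact: measurableD.
by move=> x [_ Nx]; apply: contrapT => /gh.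
Qed.

Lemma eq_Rintegral_ae (g h : X -> R) : P.-integrable setT (EFin \o g) ->
  P.-integrable setT (EFin \o h) -> {ae P, forall x, g x = h x} ->
  Rintegral P setT g = Rintegral P setT h.
Proof.
move=> ig ih gh; apply/le_anti/andP; split; apply: le_Rintegral_ae => //.
  by apply: filterS gh => x ->.
by apply: filterS gh => x ->.
Qed.

End ae_bounds.

Section L2_estimates.
Context {d : measure_display} {X : measurableType d} {R : realType}.
Variable P : probability X R.

Lemma l2dot_self_gt0 (g : X -> R) : L2 P g -> ~ {ae P, forall x, g x = 0} ->
  0 < l2dot P g g.
Proof.
move=> Lg g_neq0; rewrite lt_neqAle l2dot_self_ge0 andbT.
apply/negP => /eqP gg0; apply: g_neq0.
have I := L2_integrableM Lg Lg.
have : (\int[P]_x `|(g x * g x)%:E|)%E = 0%E.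
  rewrite /l2dot /Rintegral in gg0.
  rewrite -[0%E]/(0%:E) gg0 (fineK (integrable_fin_num measurableT I)).
  by apply: eq_integral => x _; rewrite gee0_abs // lee_fin -expr2 sqr_ge0.
move/(ae_eq_integral_abs P measurableT (measurable_int _ I)).
by apply: filterS => x /= /(_ Logic.I) [] /eqP; rewrite mulf_eq0 orbb => /eqP.
Qed.

Lemma neg_part_sqr_le (g : X -> R) : L2 P g ->
  Rintegral P setT (fun x => `|g x| - g x) ^+ 2 <=
  4 * fine (P [set x | g x < 0]) * l2dot P g g.
Proof.
move=> Lg; set A := [set x | g x < 0]; have mA : measurable A.
  exact: measurable_lt0 (proj1 Lg).
have Igg := L2_integrableM Lg Lg; have IA := integrable_indic P mA.
have Iabs := L2_integrable (L2B (L2_norm Lg) Lg).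
rewrite [X in _ <= X]mulrC; apply: sqr_le_of_amgm.
- by apply: Rintegral_ge0 => x _; rewrite subr_ge0 ler_norm.
- exact: l2dot_self_ge0.
- by rewrite mulr_ge0 // fine_ge0.
move=> t t0; have -> : t * l2dot P g g + 4 * fine (P A) / t =
    Rintegral P setT (fun x => t * (g x * g x) + 4 / t * \1_A x).
  rewrite RintegralD ?integrableZl_EFin // !RintegralZl //.
  have -> : Rintegral P setT (fun x => \1_A x) = fine (P A).
    by rewrite /Rintegral integral_indic // setIT.
  by rewrite mulrC; ring.
rewrite -RintegralZl //; apply: le_Rintegral => //.
- exact: integrableZl_EFin.
- by apply: integrableD_EFin; exact: integrableZl_EFin.
(* on {g < 0}: 2 (|g| - g) = -4 g <= t g^2 + 4 / t *)
move=> x _; rewrite indicE; have t_neq0 : t != 0 by rewrite gt_eqF.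
case: (ltP (g x) 0) => gx; last first.
  rewrite ger0_norm // subrr mulr0.
  by have t_ge0 := ltW t0; rewrite addr_ge0 ?mulr_ge0 ?invr_ge0 ?ler0n.
rewrite (mem_set (gx : A x)) mulr1 ltr0_norm // -subr_ge0 -(pmulr_rge0 _ t0).
have -> : t * (t * (g x * g x) + 4 / t - 2 * (- g x - g x)) = (t * g x + 2) ^+ 2.
  by field.
exact: sqr_ge0.
Qed.

Lemma l2dot_sum_le (g : X -> R) (a M : nat -> R) (h : nat -> X -> R) (K : nat) :
  L2 P g -> (forall n, L2 P (h n)) -> (forall n, {ae P, forall x, `|h n x| <= M n}) ->
  l2dot P g (fun x => \sum_(0 <= i < K) a i * h i x) <=
  (\sum_(0 <= i < K) `|a i| * M i) * Rintegral P setT (fun x => `|g x|).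
Proof.
move=> Lg Lh h_le; rewrite -RintegralZl //; last exact: L2_integrable (L2_norm Lg).
apply: le_Rintegral_ae.
- exact: L2_integrableM Lg (L2_sum a K Lh).
- exact: integrableZl_EFin (L2_integrable (L2_norm Lg)).
apply: filterS (ae_foralln h_le) => x /= hM; rewrite mulrC.
apply: le_trans (ler_norm _) _; rewrite normrM ler_wpM2r //.
apply: le_trans (ler_norm_sum _ _ _) _; apply: ler_sum => i _.
by rewrite normrM ler_wpM2l.
Qed.

End L2_estimates.

Section uncertainty.
Context {d : measure_display} {X : measurableType d} {R : realType}.
Variables (P : probability X R) (phi : nat -> X -> R) (f : X -> R) (s : R) (K0 : nat).

Local Notation c := (fcoef P phi f).
Local Notation L n := (fine (Linf P (phi n))).

Hypothesis s_unit : `|s| = 1.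
Hypothesis Lphi : forall n, L2 P (phi n).
Hypothesis phi_orthonormal :
  forall n m, l2dot P (phi n) (phi m) = if n == m then 1 else 0.
Hypothesis fourier_cvg :
  (fun K => (\int[P]_x (((f x - fourier_sum P phi f K x) ^+ 2)%:E))%E) @ \oo --> 0%E.
Hypothesis phi0_one : {ae P, forall x, phi 0%N x = 1}.
Hypothesis Linf_phi_fin : forall n, (Linf P (phi n) < +oo)%E.
Hypothesis Lf : L2 P f.
Hypothesis f_neq0 : ~ {ae P, forall x, f x = 0}.
Hypothesis abs_summable : (\sum_(n <oo) (`|c n| * L n)%:E < +oo)%E.
Hypothesis coef0_le0 : c 0%N <= 0.
Hypothesis value_sign : s * limn (series (fun n => c n * L n)) <= 0.
Hypothesis coef_sign_tail : forall n, (K0 <= n)%N -> 0 <= s * c n.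

Local Notation T := (\sum_(0 <= i < K0 | s * c i < 0) `|c i| * L i).
Local Notation G := (Rintegral P setT (fun x => `|f x| - f x)).

Let L_ge0 n : 0 <= L n.
Proof. by rewrite fine_ge0 ?Lnorm_ge0. Qed.

Lemma signed_series_le0 K : (K0 <= K)%N -> series (fun n => s * c n * L n) K <= 0.
Proof.
set u := fun n => s * c n * L n.
have u_ge0 n : (K0 <= n)%N -> 0 <= u n by move=> /coef_sign_tail/mulr_ge0; apply.
have u_le n : u n <= `|c n| * L n.
  by rewrite /u ler_wpM2r // (le_trans (ler_norm _)) // normrM s_unit mul1r.
have u_bounded k : series u k <= fine (\sum_(n <oo) (`|c n| * L n)%:E)%E.
  have terms_ge0 n : (0 <= (`|c n| * L n)%:E)%E.
    by rewrite lee_fin mulr_ge0 ?L_ge0.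
  rewrite -lee_fin fineK; last first.
    rewrite ge0_fin_numE ?abs_summable //.
    by apply: nneseries_ge0 => n _ _; exact: terms_ge0.
  apply: (le_trans _ (nneseries_lim_ge k (fun n _ _ => terms_ge0 n))).
  by rewrite sumEFin lee_fin; apply: ler_sum => i _; exact: u_le.
have cvg_u := is_cvg_series_bounded u_ge0 u_bounded.
have s2 : s * s = 1 by rewrite -expr2 -real_normK ?num_real // s_unit expr1n.
have series_cL : series (fun n => c n * L n) = (fun k => s * series u k).
  apply/funext => k; rewrite /series /= big_distrr /=.
  by apply: eq_bigr => i _; rewrite /u !mulrA s2 mul1r.
have lim_u : limn (series u) = s * limn (series (fun n => c n * L n)).
  by rewrite series_cL (cvg_lim _ (cvgMl_tmp (a := s) cvg_u)) // mulrA s2 mul1r.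
move=> K0K; apply: le_trans (series_le_lim u_ge0 cvg_u K0K) _; by rewrite lim_u.
Qed.

Lemma abs_coef_sum_le K : (K0 <= K)%N -> \sum_(0 <= i < K) `|c i| * L i <= 2 * T.
Proof.
move=> K0K; apply: (sum_abs_le_twice_neg s_unit K0K coef_sign_tail).
exact: (signed_series_le0 K0K).
Qed.

Let coef0_integral : c 0%N = Rintegral P setT f.
Proof.
apply: eq_Rintegral_ae (L2_integrableM Lf (Lphi 0)) (L2_integrable Lf) _.
by apply: filterS phi0_one => x /= ->; rewrite mulr1.
Qed.

Lemma coef_sqr_sum_le K : (K0 <= K)%N -> \sum_(0 <= i < K) c i ^+ 2 <= 2 * T * G.
Proof.
move=> K0K; rewrite -(l2dot_fourier_sumr Lphi Lf).
have abs_f : Rintegral P setT (fun x => `|f x|) = c 0%N + G.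
  rewrite coef0_integral -RintegralD ?L2_integrable //; last exact/L2B/Lf/L2_norm.
  by apply: eq_Rintegral => x _; rewrite addrC subrK.
have abs_f_ge0 : 0 <= c 0%N + G by rewrite -abs_f Rintegral_ge0.
have T_ge0 : 0 <= T by rewrite sumr_ge0 // => i _; rewrite mulr_ge0.
apply: le_trans (l2dot_sum_le c K Lf Lphi (fun n => ae_abs_le_Linf (Linf_phi_fin n))) _.
rewrite abs_f; apply: le_trans (ler_wpM2r abs_f_ge0 (abs_coef_sum_le K0K)) _.
by rewrite ler_wpM2l ?mulr_ge0 // gerDr.
Qed.

Lemma l2norm_le : l2dot P f f <= 2 * T * G.
Proof.
have cvg_sum := parseval Lphi phi_orthonormal Lf fourier_cvg.
rewrite -(cvg_lim _ cvg_sum) //; apply: limr_le; first exact: cvgP cvg_sum.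
by exists K0 => // K /= K0K; exact: coef_sqr_sum_le.
Qed.

Lemma uncertainty_core :
  16^-1 <= fine (P [set x | f x < 0]) * \sum_(0 <= i < K0 | s * c i < 0) L i ^+ 2.
Proof.
apply: (@uncertainty_ineq _ (l2dot P f f) T G _
                         (\sum_(0 <= i < K0 | s * c i < 0) `|c i| ^+ 2)).
- exact: l2dot_self_gt0.
- by rewrite sumr_ge0 // => i _; rewrite mulr_ge0.
- by apply: Rintegral_ge0 => x _; rewrite subr_ge0 ler_norm.
- by rewrite fine_ge0 // measure_ge0.
- by rewrite sumr_ge0 // => i _; rewrite sqr_ge0.
- exact: l2norm_le.
- exact: neg_part_sqr_le.
- exact: big_cauchy_schwarz.
apply: le_trans (bessel Lphi phi_orthonormal Lf K0); rewrite big_mkcond /=.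
by apply: ler_sum => i _; case: ifP; rewrite ?sqr_ge0 // real_normK ?num_real.
Qed.

End uncertainty.

Theorem mainTheorem2 (d : measure_display) (X : measurableType d) (R : realType)
    (P : probability X R) (dist : X -> X -> R) (phi : nat -> X -> R) (o : X)
    (s : R) (f : X -> R) :
  (s = 1 \/ s = -1) ->
  is_metric dist ->
  (forall A : set X, metric_open dist A -> measurable A) ->
  admissible P dist phi o ->
  A_s P s dist phi o f ->
  ~ {ae P, forall x, f x = 0} ->
  ((P [set x | (f x < 0)%R] *
      \sum_(n <oo | (s * fcoef P phi f n < 0)%R) ((fine (Linf P (phi n))) ^+ 2)%:E
    >= (16^-1)%:E)%E /\
   (P (ecball dist o (r_fX P dist o f)) *
      (\sum_(0 <= n < kmin (fun n => s * fcoef P phi f n))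
          (fine (Linf P (phi n))) ^+ 2)%:E
    >= (16^-1)%:E)%E).
Proof.
move=> s_pm dist_metric open_meas [[Lphi [orth fourier_cvg]] [phi0 phi_Linf]].
move=> [Lf summable coef0 [K0 _ K0_tail] value] f_neq0.
have s_unit : `|s| = 1 by case: s_pm => ->; rewrite ?normrN normr1.
have valE n : val_at P dist o (phi n) = fine (Linf P (phi n)).
  by apply: cvg_lim => //; exact: (phi_Linf n).2.
have value_sign :
    s * limn (series (fun n => fcoef P phi f n * fine (Linf P (phi n)))) <= 0.
  by move: value; rewrite /val_series; under eq_fun do rewrite valE.
have core := uncertainty_core s_unit Lphi orth (fourier_cvg f Lf) phi0
  (fun n => (phi_Linf n).1) Lf f_neq0 summable coef0 value_sign.
have neg_fin : P [set x | f x < 0] = (fine (P [set x | f x < 0]))%:E.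
  by rewrite fineK // fin_num_measure //; exact: measurable_lt0 (proj1 Lf).
split.
  rewrite (eseries_cond_cut _ (K0 := K0)) => [|i /K0_tail]; last by rewrite -leNgt.
  by rewrite neg_fin -EFinM lee_fin; exact: core.
have km_tail := kmin_tail K0_tail; set km := kmin _ in km_tail *.
set Sg := \sum_(0 <= i < km | s * fcoef P phi f i < 0) fine (Linf P (phi i)) ^+ 2.
have Sg_le : Sg <= \sum_(0 <= i < km) fine (Linf P (phi i)) ^+ 2.
  by rewrite /Sg big_mkcond; apply: ler_sum => i _; case: ifP; rewrite ?sqr_ge0.
apply: (@le_trans _ _ ((fine (P [set x | f x < 0]) * Sg)%:E)).
  by rewrite lee_fin; exact: core km_tail.
rewrite EFinM -neg_fin; apply: lee_pmul; rewrite ?measure_ge0 ?lee_fin ?sumr_ge0 //.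
- by move=> i _; exact: sqr_ge0.
- exact: (measure_neg_le_ecball_r_fX o dist_metric open_meas P (proj1 Lf)).
Qed.
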